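(* Let $u$ be a set, $F,G$ conjunctive set transformers on $u$ with $F(u)=u$ and $G(u)=u$, and $q\subseteq u$. Then $X(q)(\varnothing)$ equals the least fixpoint of the monotone map ${\cal F}(q)(\varnothing):Y\mapsto q\cup(G(\varnothing)\cap F(Y))$ on $\mathbb{P}(u)$; equivalently, the guard $\overline{X(q)(\varnothing)}$ of $X(q)$ is the complement of this least fixpoint.
   Context: A set transformer on $u$ is a map $E:\mathbb{P}(u)\to\mathbb{P}(u)$; it is conjunctive if it preserves intersections of nonempty families of subsets (in particular it is monotone). For $a\subseteq u$, $\overline{a}=u\setminus a$; $\mathrm{grd}(E)=\overline{E(\varnothing)}$. The fair iteration $X(q)=\overline{q}\Longrightarrow((F\,;X(q))\mathrel{\triangledown} G)$ (guarded command, sequencing, and dovetail/fair choice) is the set transformer $X(q)(r)={\cal L}(X(q))(r)\cap\mathrm{pre}(X(q))$ where: the liberal part ${\cal L}(X(q))(r)$ is the greatest fixpoint of the monotone map $Y\mapsto q\cup(G(r)\cap F(Y))$ on $\mathbb{P}(u)$, and the termination set $\mathrm{pre}(X(q))$ is the least fixpoint of the monotone map $Y\mapsto q\cup\mathrm{grd}(G)\cup F(Y)$. *)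

(* subsets of the universe u are modelled as
   [set T] for a type T playing the role of u. *)
From mathcomp Require Import all_boot.
From mathcomp Require Import boolp classical_sets.
Set Implicit Arguments. Unset Strict Implicit. Unset Printing Implicit Defensive.
Local Open Scope classical_set_scope.

Definition transformer (T : Type) := set T -> set T.

Definition conjunctive (T : Type) (E : transformer T) : Prop :=
  forall S : set (set T), S !=set0 ->
    E (\bigcap_(Y in S) Y) = \bigcap_(Y in S) E Y.

Definition grd (T : Type) (E : transformer T) : set T := ~` E set0.

Definition lfp (T : Type) (f : set T -> set T) : set T :=
  \bigcap_(Y in [set Y | f Y `<=` Y]) Y.
Definition gfp (T : Type) (f : set T -> set T) : set T :=
  \bigcup_(Y in [set Y | Y `<=` f Y]) Y.

Definition liberal (T : Type) (F G : transformer T) (q r : set T) : set T :=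
  gfp (fun Y => q `|` (G r `&` F Y)).

Definition pre_X (T : Type) (F G : transformer T) (q : set T) : set T :=
  lfp (fun Y => q `|` grd G `|` F Y).

(* The fair iteration X(q) = ~q ==> ((F ; X(q)) dovetail G). *)
Definition fairX (T : Type) (F G : transformer T) (q : set T) : transformer T :=
  fun r => liberal F G q r `&` pre_X F G q.

(** The fixpoint [X(q)(∅) = L ∩ pre] with [L = νY. h Y] for
    [h Y = q ∪ (G ∅ ∩ F Y)] and [pre = μY. q ∪ grd G ∪ F Y].  The least
    fixpoint [μh] is a post-fixpoint of [h], hence below [L], and lies below
    [pre] because [h] is pointwise below the map defining [pre].  Conversely,
    [pre ⊆ ¬L ∪ μh] by induction on [pre]: a point of [L] outside [q] lies in
    [G ∅], so it is not in [grd G], and if it lies in [F(¬L ∪ μh)] then by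
    conjunctivity it lies in [F((¬L ∪ μh) ∩ L) ⊆ F(μh)], hence in [μh]. *)
From mathcomp Require Import all_boot.
From mathcomp Require Import boolp classical_sets.
Set Implicit Arguments.
Unset Strict Implicit.
Unset Printing Implicit Defensive.
Local Open Scope classical_set_scope.

Section Conjunctive.
Variables (T : Type) (F : set T -> set T).
Hypothesis hF : conjunctive F.

Lemma conjunctiveI (Y Z : set T) : F (Y `&` Z) = F Y `&` F Z.
Proof.
have pairI (E : set T -> set T) :
    \bigcap_(W in [set W | W = Y \/ W = Z]) E W = E Y `&` E Z.
  apply/seteqP; split=> [x H|x [EYx EZx] W [->|->] //].
  by split; apply: H; [left|right].
have ne : [set W | W = Y \/ W = Z] !=set0 by exists Y; left.
by have := hF ne; rewrite !pairI.
Qed.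

Lemma conjunctive_subset (Y Z : set T) : Y `<=` Z -> F Y `<=` F Z.
Proof. by move=> /setIidl YZ x; rewrite -YZ conjunctiveI => -[]. Qed.

End Conjunctive.

Section Fixpoints.
Variables (T : Type) (f : set T -> set T).

Lemma lfp_lb (Y : set T) : f Y `<=` Y -> lfp f `<=` Y.
Proof. by move=> fY x; apply. Qed.

Lemma gfp_ub (Y : set T) : Y `<=` f Y -> Y `<=` gfp f.
Proof. by move=> Yf x Yx; exists Y. Qed.

Hypothesis f_homo : forall A B : set T, A `<=` B -> f A `<=` f B.

Lemma lfp_prefix : f (lfp f) `<=` lfp f.
Proof. by move=> x flx Y fY; apply: (fY); exact: f_homo (lfp_lb fY) _ flx. Qed.

Lemma lfp_postfix : lfp f `<=` f (lfp f).
Proof. by apply: lfp_lb; apply: f_homo lfp_prefix. Qed.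

Lemma gfp_postfix : gfp f `<=` f (gfp f).
Proof. by move=> x [Y Yf Yx]; apply: f_homo (Yf x Yx); apply: gfp_ub. Qed.

End Fixpoints.

Lemma lfp_le (T : Type) (f g : set T -> set T) :
  (forall A B : set T, A `<=` B -> f A `<=` f B) ->
  (forall Y, g Y `<=` f Y) -> lfp g `<=` lfp f.
Proof.
by move=> f_homo gf; apply: lfp_lb; exact: subset_trans (gf _) (lfp_prefix f_homo).
Qed.

Section FairIterationGuard.
Variables (T : Type) (F G : set T -> set T) (q : set T).
Hypothesis hF : conjunctive F.

Let h (Y : set T) := q `|` (G set0 `&` F Y).
Let k (Y : set T) := q `|` grd G `|` F Y.

Let h_homo (A B : set T) : A `<=` B -> h A `<=` h B.
Proof.
by move=> AB x [qx|[Gx FAx]]; [left|right; split=> //; exact: conjunctive_subset FAx].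
Qed.

Lemma lfp_sub_liberal : lfp h `<=` liberal F G q set0.
Proof. by apply: gfp_ub; exact: lfp_postfix h_homo. Qed.

Let k_homo (A B : set T) : A `<=` B -> k A `<=` k B.
Proof. by move=> AB x [qgx|FAx]; [left|right; exact: conjunctive_subset FAx]. Qed.

Lemma lfp_sub_pre_X : lfp h `<=` pre_X F G q.
Proof. by apply: lfp_le k_homo _ => Y x [qx|[_ FYx]]; [left; left|right]. Qed.

Lemma liberal_pre_X_sub_lfp :
  liberal F G q set0 `&` pre_X F G q `<=` lfp h.
Proof.
set L := liberal F G q set0.
suff pre_sub : pre_X F G q `<=` (fun y => L y -> lfp h y).
  by move=> x [Lx prex]; exact: pre_sub.
apply: lfp_lb => y ky Ly; apply: (lfp_prefix h_homo).
have [qy|[G0y FLy]] := gfp_postfix h_homo Ly; first by left.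
case: ky => [[qy|//]|FZy]; first by left.
right; split=> //.
have : F ((fun z => L z -> lfp h z) `&` L) y by rewrite conjunctiveI.
by apply: conjunctive_subset => // z [Zz Lz]; exact: Zz.
Qed.

End FairIterationGuard.

Theorem lemma4 (T : Type) (F G : set T -> set T) (q : set T)
  (hF : conjunctive F) (hG : conjunctive G)
  (hFu : F setT = setT) (hGu : G setT = setT) :
  fairX F G q set0 = lfp (fun Y => q `|` (G set0 `&` F Y)).
Proof.
apply/seteqP; split; first exact: liberal_pre_X_sub_lfp.
by move=> x lx; split; [exact: lfp_sub_liberal | exact: lfp_sub_pre_X].
Qed.
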